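(* Let $A\in\mathbb{R}^{K\times M}$, $\boldsymbol\beta\in\mathbb{R}^K$, $C>0$, with $\mathcal F_0=\{\mathbf w\in\mathbb{R}^M:A\mathbf w=\boldsymbol\beta,\ \mathbf 0\le\mathbf w\le C\mathbf 1\}$ nonempty. Let $\hat A_n,\hat{\boldsymbol\beta}_n$ be random with $\max_{i,j}|\hat A_{n,ij}-A_{ij}|=O_p(n^{-1/2})$ and $\|\hat{\boldsymbol\beta}_n-\boldsymbol\beta\|_\infty=O_p(n^{-1/2})$, let $\hat m_n=\min_{\mathbf 0\le\mathbf w\le C\mathbf 1}\|\hat A_n\mathbf w-\hat{\boldsymbol\beta}_n\|_\infty$, and for a deterministic sequence $\kappa_n>0$ let $\mathcal F_n=\{\mathbf w:\|\hat A_n\mathbf w-\hat{\boldsymbol\beta}_n\|_\infty\le\kappa_n/\sqrt n+\hat m_n,\ \mathbf 0\le\mathbf w\le C\mathbf 1\}$. Then: (i) if $\kappa_n\to\infty$ and $\kappa_n/\sqrt n\to0$, then $d_H(\mathcal F_n,\mathcal F_0)=O_p(\kappa_n/\sqrt n)$; (ii) if $A$ has full column rank and $\kappa_n$ is bounded, then $d_H(\mathcal F_n,\mathcal F_0)=O_p(n^{-1/2})$.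
   Context: For sets $S,T\subseteq\mathbb{R}^M$, the Hausdorff distance is $d_H(S,T)=\max\{\sup_{s\in S}\mathrm{dist}(s,T),\sup_{t\in T}\mathrm{dist}(t,S)\}$ with $\mathrm{dist}(u,T)=\inf_{v\in T}\|u-v\|_2$. $\|\cdot\|_\infty$ is the maximum absolute entry of a vector. *)

From HB Require Import structures.
From mathcomp Require Import all_boot all_order all_algebra.
From mathcomp Require Import all_classical all_reals all_analysis.
Set Implicit Arguments. Unset Strict Implicit. Unset Printing Implicit Defensive.
Import Order.TTheory GRing.Theory Num.Theory.
Import numFieldNormedType.Exports.
Local Open Scope classical_set_scope.
Local Open Scope ring_scope.

Section Defs.
Variable R : realType.

Definition vinfnorm (K : nat) (v : 'cV[R]_K) : R :=
  \big[Num.max/0]_(i < K) `|v i ord0|.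

Definition mmaxabs (K M : nat) (X : 'M[R]_(K, M)) : R :=
  \big[Num.max/0]_(ij : 'I_K * 'I_M) `|X ij.1 ij.2|.

Definition enorm (M : nat) (v : 'cV[R]_M) : R :=
  Num.sqrt (\sum_(i < M) v i ord0 ^+ 2).

Definition dist_set (M : nat) (u : 'cV[R]_M) (S : set 'cV[R]_M) : R :=
  inf [set enorm (u - v) | v in S].

(* Hausdorff distance (sets used are nonempty and bounded) *)
Definition hausdorff (M : nat) (S T : set 'cV[R]_M) : R :=
  Num.max (sup [set dist_set s T | s in S]) (sup [set dist_set t S | t in T]).

Definition box (M : nat) (C : R) : set 'cV[R]_M :=
  [set w | forall i, 0 <= w i ord0 <= C].

Definition F0 (K M : nat) (A : 'M[R]_(K, M)) (beta : 'cV[R]_K) (C : R)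
  : set 'cV[R]_M := [set w | A *m w = beta /\ box C w].

(* \hat m = min_{w in box} ||A w - b||_inf  (the min exists; written as inf) *)
Definition mhat (K M : nat) (A : 'M[R]_(K, M)) (b : 'cV[R]_K) (C : R) : R :=
  inf [set vinfnorm (A *m w - b) | w in box C].

Definition Fn (K M : nat) (Ah : 'M[R]_(K, M)) (bh : 'cV[R]_K) (C : R)
  (kappa : R) (n : nat) : set 'cV[R]_M :=
  [set w | vinfnorm (Ah *m w - bh) <= kappa / Num.sqrt n%:R + mhat Ah bh C
           /\ box C w].

End Defs.

(* Stochastic boundedness X_n = O_p(a_n), using outer probability
   (the bad event is required to be covered by a measurable set of small
   probability, so no measurability assumption on X_n is needed). *)
Definition bigOp (R : realType) (d : measure_display) (T : measurableType d)
  (P : probability T R) (X : nat -> T -> R) (a : nat -> R) : Prop :=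
  forall eps : R, 0 < eps -> exists Mb : R, exists N : nat,
    forall n : nat, (N <= n)%N ->
      exists E : set T, measurable E /\
        [set w | Mb * a n < `|X n w|] `<=` E /\ (P E < eps%:E)%E.

(* Hoffman's error bound: there is L, depending on A only, such that every x in
   the box lies within L |A x - beta|_oo of F0.  To see it, write w0 - x (w0 in
   F0) as a sum of conformal pieces whose supports index linearly independent
   columns of A; on such a support A has a bounded left inverse, and adding the
   pieces to x stays in the box.
   Perturbing the data by e = M C max|Ah - A| + |bh - beta|_oo changes every
   residual on the box by at most e, so points of F_n have residual at most
   kappa/sqrt n + 2 e for (A, beta) and lie within sqrt M L (kappa/sqrt n + 2 e)
   of F0.  Conversely F0 is contained in F_n as soon as e <= kappa/sqrt n, which
   holds with high probability when kappa_n -> oo.  Under full column rank F0 is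
   a single point, close to any point of the nonempty set F_n. *)

From HB Require Import structures.
From mathcomp Require Import all_boot all_order all_algebra.
From mathcomp Require Import all_classical all_reals all_analysis.
From mathcomp Require Import lra.
Import Order.TTheory GRing.Theory Num.Theory.
Import numFieldNormedType.Exports.
Local Open Scope classical_set_scope.
Local Open Scope ring_scope.
Set Implicit Arguments. Unset Strict Implicit.

Section SupNorm.
Variable R : realType.

Lemma vinfnorm_ge0 K (v : 'cV[R]_K) : 0 <= vinfnorm v.
Proof. by rewrite /vinfnorm; elim/big_ind: _ => //= x y; rewrite le_max => ->. Qed.

Lemma ler_vinfnorm K (v : 'cV[R]_K) i : `|v i ord0| <= vinfnorm v.
Proof. exact: (le_bigmax 0 (fun i => `|v i ord0|) i). Qed.

Lemma vinfnorm_le K (v : 'cV[R]_K) c :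
  0 <= c -> (forall i, `|v i ord0| <= c) -> vinfnorm v <= c.
Proof. by move=> c0 h; apply/bigmax_leP. Qed.

Lemma vinfnorm0 K : vinfnorm (0 : 'cV[R]_K) = 0.
Proof.
apply/eqP; rewrite eq_le vinfnorm_ge0 andbT.
by apply: vinfnorm_le => // i; rewrite mxE normr0.
Qed.

Lemma vinfnormN K (v : 'cV[R]_K) : vinfnorm (- v) = vinfnorm v.
Proof. by apply: eq_bigr => i _; rewrite mxE normrN. Qed.

Lemma vinfnorm_distC K (u v : 'cV[R]_K) : vinfnorm (u - v) = vinfnorm (v - u).
Proof. by rewrite -vinfnormN opprB. Qed.

Lemma vinfnormD K (u v : 'cV[R]_K) : vinfnorm (u + v) <= vinfnorm u + vinfnorm v.
Proof.
apply: vinfnorm_le => [|i]; first by rewrite addr_ge0 ?vinfnorm_ge0.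
by rewrite mxE (le_trans (ler_normD _ _)) // lerD ?ler_vinfnorm.
Qed.

Lemma vinfnormZ K (v : 'cV[R]_K) t : 0 <= t -> vinfnorm (t *: v) <= t * vinfnorm v.
Proof.
move=> t0; apply: vinfnorm_le => [|i]; first by rewrite mulr_ge0 ?vinfnorm_ge0.
by rewrite mxE normrM ger0_norm // ler_wpM2l ?ler_vinfnorm.
Qed.

Lemma mmaxabs_ge0 K M (X : 'M[R]_(K, M)) : 0 <= mmaxabs X.
Proof. by rewrite /mmaxabs; elim/big_ind: _ => //= x y; rewrite le_max => ->. Qed.

Lemma ler_mmaxabs K M (X : 'M[R]_(K, M)) k j : `|X k j| <= mmaxabs X.
Proof. exact: (le_bigmax 0 (fun ij : 'I_K * 'I_M => `|X ij.1 ij.2|) (k, j)). Qed.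

Lemma mmaxabsN K M (X : 'M[R]_(K, M)) : mmaxabs (- X) = mmaxabs X.
Proof. by apply: eq_bigr => ij _; rewrite mxE normrN. Qed.

Lemma vinfnorm_mulmx_le K M (X : 'M[R]_(K, M)) v :
  vinfnorm (X *m v) <= M%:R * mmaxabs X * vinfnorm v.
Proof.
apply: vinfnorm_le => [|k]; first by rewrite !mulr_ge0 ?mmaxabs_ge0 ?vinfnorm_ge0.
rewrite mxE (le_trans (ler_norm_sum _ _ _)) //.
have -> : M%:R * mmaxabs X * vinfnorm v = \sum_(j < M) mmaxabs X * vinfnorm v.
  by rewrite sumr_const card_ord -mulrA mulr_natl.
apply: ler_sum => j _; rewrite normrM.
by apply: ler_pM; rewrite ?normr_ge0 ?ler_mmaxabs ?ler_vinfnorm.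
Qed.

Lemma enorm_le_vinfnorm M (v : 'cV[R]_M) : enorm v <= Num.sqrt M%:R * vinfnorm v.
Proof.
have sum_le : \sum_(i < M) v i ord0 ^+ 2 <= M%:R * vinfnorm v ^+ 2.
  rewrite mulr_natl -[X in _ *+ X](card_ord M) -sumr_const.
  apply: ler_sum => i _; rewrite -real_normK ?num_real //.
  by rewrite lerXn2r ?nnegrE ?normr_ge0 ?vinfnorm_ge0 ?ler_vinfnorm.
apply: le_trans (ler_wsqrtr sum_le) _.
by rewrite sqrtrM // sqrtr_sqr ger0_norm ?vinfnorm_ge0.
Qed.

Lemma enorm_ge0 M (v : 'cV[R]_M) : 0 <= enorm v.
Proof. exact: sqrtr_ge0. Qed.

End SupNorm.

Section FreeSupport.
Variables (R : realType) (K M : nat) (A : 'M[R]_(K, M)).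

Definition vsupp (v : 'cV[R]_M) : {set 'I_M} := [set i | v i ord0 != 0].

Definition supported_in (S : {set 'I_M}) (u : 'cV[R]_M) :=
  forall i, i \notin S -> u i ord0 = 0.

Lemma notin_vsupp (v : 'cV[R]_M) i : (i \notin vsupp v) = (v i ord0 == 0).
Proof. by rewrite inE negbK. Qed.

Lemma supported_in_vsupp (v : 'cV[R]_M) : supported_in (vsupp v) v.
Proof. by move=> i; rewrite notin_vsupp => /eqP. Qed.

Lemma supported_in_vsupp_eq0 (v w : 'cV[R]_M) i :
  supported_in (vsupp w) v -> w i ord0 = 0 -> v i ord0 = 0.
Proof. by move=> vw wi; apply: vw; rewrite notin_vsupp wi. Qed.

Lemma vsupp_proper (v w : 'cV[R]_M) i :
  supported_in (vsupp w) v -> v i ord0 = 0 -> w i ord0 != 0 ->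
  vsupp v \proper vsupp w.
Proof.
move=> vw vi wi; apply/properP; split; last by exists i; rewrite ?inE ?vi ?eqxx.
by apply/fintype.subsetP => j; apply: contraLR => /vw; rewrite notin_vsupp => ->.
Qed.

Definition injective_on (S : {set 'I_M}) :=
  forall u, supported_in S u -> A *m u = 0 -> u = 0.

Lemma injective_on_left_inverse S : injective_on S ->
  exists G : 'M[R]_(M, K), forall q, supported_in S q -> G *m (A *m q) = q.
Proof.
move=> injS.
(* [D] projects onto the coordinates outside [S], so [col_mx A D] is injective. *)
pose D : 'M[R]_M := \matrix_(i, j) ((i == j) && (i \notin S))%:R.
have DE (u : 'cV[R]_M) i : (D *m u) i ord0 = (i \notin S)%:R * u i ord0.
  rewrite !mxE (bigD1 i) //= big1 ?addr0 ?mxE ?eqxx // => j ji.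
  by rewrite mxE eq_sym (negbTE ji) mul0r.
have DS u : supported_in S u -> D *m u = 0.
  move=> uS; apply/matrixP => i j; rewrite ord1 DE mxE.
  by case: (boolP (i \in S)) => [_|/uS ->]; rewrite ?mul0r ?mulr0.
have /row_freeP [B XB] : row_free (col_mx A D)^T.
  apply: inj_row_free => v /(congr1 trmx); rewrite trmx_mul trmxK trmx0.
  rewrite mul_col_mx => /eqP; rewrite col_mx_eq0 => /andP [/eqP Av /eqP Dv].
  suff /(congr1 trmx) : v^T = 0 by rewrite trmxK trmx0.
  apply: injS Av => i iS; move/matrixP: Dv => /(_ i ord0).
  by rewrite DE iS !mxE mul1r.
have BX : B^T *m col_mx A D = 1%:M by rewrite -[B^T *m _]trmxK trmx_mul trmxK XB trmx1.
exists (lsubmx B^T) => q qS.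
rewrite -[in RHS](mul1mx q) -BX -[in RHS](hsubmxK B^T) mul_row_col mulmxDl.
by rewrite -!mulmxA DS ?mulmx0 ?addr0.
Qed.

Lemma injective_on_bound S : exists2 c, 0 <= c &
  (injective_on S -> forall q, supported_in S q -> vinfnorm q <= c * vinfnorm (A *m q)).
Proof.
have [injS|ninjS] := pselect (injective_on S); last by exists 0.
have [G GA] := injective_on_left_inverse injS.
exists (K%:R * mmaxabs G); first by rewrite mulr_ge0 ?mmaxabs_ge0.
by move=> _ q qS; rewrite -{1}(GA q qS) vinfnorm_mulmx_le.
Qed.

Definition free_support (q : 'cV[R]_M) := injective_on (vsupp q).

Lemma free_support_bound : exists2 L, 0 <= L &
  forall q, free_support q -> vinfnorm q <= L * vinfnorm (A *m q).
Proof.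
have [c c0 cS] := fin_all_exists2 injective_on_bound.
exists (\big[Num.max/0]_(S : {set 'I_M}) c S).
  by elim/big_ind: _ => //= x y; rewrite le_max => ->.
move=> q qfree; apply: le_trans (cS _ qfree _ (@supported_in_vsupp q)) _.
by rewrite ler_wpM2r ?vinfnorm_ge0 // (le_bigmax 0 c (vsupp q)).
Qed.

End FreeSupport.

Section ScalarSigns.
Variable R : realType.

Lemma mulr_ge0_subl (a b c : R) : 0 <= a * c -> `|b| <= `|a| -> 0 <= (a - b) * c.
Proof.
move=> ac0 ba; rewrite mulrBl subr_ge0 (le_trans (ler_norm _)) //.
by rewrite -(ger0_norm ac0) !normrM ler_wpM2r.
Qed.

Lemma between0_of_mul_ge0 (p d : R) :
  0 <= p * d -> `|p| <= `|d| -> 0 <= p <= d \/ d <= p <= 0.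
Proof.
case: (lerP 0 d) => d0; case: (lerP 0 p) => p0;
  rewrite ?(ger0_norm d0) ?(ltr0_norm d0) ?(ger0_norm p0) ?(ltr0_norm p0) => pd pdb;
  [left|left|right|right]; apply/andP; split; nra.
Qed.

End ScalarSigns.

Section Conformal.
Variables (R : realType) (K M : nat) (A : 'M[R]_(K, M)).

Definition conformal (q d : 'cV[R]_M) :=
  forall i, 0 <= q i ord0 * d i ord0 /\ (d i ord0 = 0 -> q i ord0 = 0).

Definition between0 (p d : 'cV[R]_M) := forall i,
  0 <= p i ord0 <= d i ord0 \/ d i ord0 <= p i ord0 <= 0.

Lemma conformal_refl d : conformal d d.
Proof. by move=> i; split; rewrite // -expr2 sqr_ge0. Qed.

Lemma free_support_step q d : conformal q d -> ~ free_support A q ->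
  exists q', [/\ conformal q' d, A *m q' = A *m q & vsupp q' \proper vsupp q].
Proof.
move=> qd /existsNP [u /not_implyP [uq /not_implyP [Au u0]]].
have /matrix0Pn [i0 [j0 ui0]] : u != 0 by apply/eqP.
rewrite ord1 in ui0.
have [i ui imin] := arg_minP (P := fun j => u j ord0 != 0)
  (fun j => `|q j ord0 / u j ord0|) ui0.
(* Moving along the kernel direction [u] by the smallest ratio [q_j / u_j]
   zeroes a coordinate of [q] without flipping the sign of any other. *)
set t := q i ord0 / u i ord0.
have tu_le j : `|t * u j ord0| <= `|q j ord0|.
  have [uj0|uj] := eqVneq (u j ord0) 0; first by rewrite uj0 mulr0 normr0.
  have -> : `|q j ord0| = `|q j ord0 / u j ord0| * `|u j ord0| by rewrite -normrM divfK.
  by rewrite normrM ler_wpM2r ?imin.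
have q'E j : (q - t *: u) j ord0 = q j ord0 - t * u j ord0 by rewrite !mxE.
have q'q : supported_in (vsupp q) (q - t *: u).
  by move=> j /[dup] /uq uj; rewrite notin_vsupp q'E uj mulr0 subr0 => /eqP.
exists (q - t *: u); split.
- move=> j; rewrite q'E; split; first by apply: mulr_ge0_subl; case: (qd j).
  by move=> /(proj2 (qd j)) qj; rewrite qj (supported_in_vsupp_eq0 uq qj) mulr0 subr0.
- by rewrite mulmxBr -scalemxAr Au scaler0 subr0.
- apply: (vsupp_proper (i := i)) => //; first by rewrite q'E /t divfK ?subrr.
  by apply: contra ui => /eqP /(supported_in_vsupp_eq0 uq) ->.
Qed.

Lemma exists_free_conformal q d : conformal q d ->
  exists q', [/\ free_support A q', A *m q' = A *m q & conformal q' d].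
Proof.
have [n] := ubnP #|vsupp q|; elim: n q => // n IH q lt_qn qd.
have [qfree|nfree] := pselect (free_support A q); first by exists q.
have [q' [q'd Aq' q'q]] := free_support_step qd nfree.
have [q'' [q''free Aq'' q''d]] := IH q' (leq_trans (proper_card q'q) (ltnSE lt_qn)) q'd.
by exists q''; rewrite Aq'' Aq'.
Qed.

Lemma conformal_ratio_gt0 q d j : conformal q d -> q j ord0 != 0 ->
  0 < d j ord0 / q j ord0.
Proof.
move=> qd qj; have [qd0 dq] := qd j.
have dj : d j ord0 != 0 by apply: contra qj => /eqP /dq ->.
have -> : d j ord0 / q j ord0 = q j ord0 * d j ord0 / q j ord0 ^+ 2.
  by rewrite expr2 invfM mulrA [q j ord0 * _]mulrC mulfK.
by rewrite divr_gt0 // lt0r ?qd0 ?sqr_ge0 ?sqrf_eq0 ?mulf_neq0 ?qj.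
Qed.

Lemma conformal_cut q d : conformal q d -> ~ between0 q d ->
  exists t, [/\ 0 < t < 1, between0 (t *: q) d &
    exists2 i, q i ord0 != 0 & d i ord0 = t * q i ord0].
Proof.
move=> qd /existsNP [j0 nbj0].
have dq_lt : `|d j0 ord0| < `|q j0 ord0|.
  rewrite ltNge; apply/negP => qd_le; apply: nbj0.
  by apply: between0_of_mul_ge0 qd_le; case: (qd j0).
have qj0 : q j0 ord0 != 0 by rewrite -normr_gt0 (le_lt_trans _ dq_lt).
have [i qi imin] := arg_minP (P := fun j => q j ord0 != 0)
  (fun j => d j ord0 / q j ord0) qj0.
set t := d i ord0 / q i ord0.
have t0 : 0 < t by apply: conformal_ratio_gt0.
exists t; split; last by exists i; rewrite // /t divfK.
- rewrite t0 (le_lt_trans (imin _ qj0)) //.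
  rewrite -[X in X < _]gtr0_norm ?conformal_ratio_gt0 // normrM normfV.
  by rewrite ltr_pdivrMr ?normr_gt0 // mul1r.
- move=> j; rewrite mxE; apply: between0_of_mul_ge0.
    by rewrite -mulrA mulr_ge0 ?(ltW t0) //; case: (qd j).
  have [->|qj] := eqVneq (q j ord0) 0; first by rewrite mulr0 normr0.
  have -> : `|d j ord0| = `|d j ord0 / q j ord0| * `|q j ord0| by rewrite -normrM divfK.
  by rewrite normrM (gtr0_norm t0) ler_wpM2r // (gtr0_norm (conformal_ratio_gt0 qd qj)) imin.
Qed.

Lemma between0_addr p r d : between0 p (d - r) -> between0 r d -> between0 (p + r) d.
Proof.
move=> pdr rd i; move: (pdr i) (rd i); rewrite !mxE.
by case=> /andP [? ?] [] /andP [? ?]; [left|right|left|right]; apply/andP; split; lra.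
Qed.

Lemma bounded_conformal_preimage L : 0 <= L ->
  (forall q, free_support A q -> vinfnorm q <= L * vinfnorm (A *m q)) ->
  forall d, exists p,
    [/\ between0 p d, A *m p = A *m d & vinfnorm p <= L * vinfnorm (A *m d)].
Proof.
move=> L0 hL d; have [n] := ubnP #|vsupp d|; elim: n d => // n IH d lt_dn.
have [q [qfree Aq qd]] := exists_free_conformal (conformal_refl d).
have qL : vinfnorm q <= L * vinfnorm (A *m d) by rewrite -Aq hL.
have [qd_between|] := pselect (between0 q d); first by exists q.
(* Otherwise peel off [t *: q], which kills a coordinate of [d]. *)
case/(conformal_cut qd) => t [/andP [t0 t1] tqd [i qi dit]].
have d'd : vsupp (d - t *: q) \proper vsupp d.
  apply: (vsupp_proper (i := i)); last by rewrite dit mulf_neq0 ?(gt_eqF t0).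
    move=> j; rewrite notin_vsupp => /eqP dj.
    by rewrite !mxE dj (proj2 (qd j) dj) mulr0 subr0.
  by rewrite !mxE dit subrr.
have [p' [p'd' Ap' p'L]] := IH _ (leq_trans (proper_card d'd) (ltnSE lt_dn)).
have Ad' : A *m (d - t *: q) = (1 - t) *: (A *m d).
  by rewrite mulmxBr -scalemxAr Aq scalerBl scale1r.
exists (p' + t *: q); split; first exact: between0_addr.
  by rewrite mulmxDr Ap' Ad' -scalemxAr Aq -scalerDl subrK scale1r.
have t1' : 0 <= 1 - t by rewrite subr_ge0 ltW.
have := ler_wpM2l L0 (vinfnormZ (A *m d) t1').
have := ler_wpM2l (ltW t0) qL.
have := vinfnormZ q (ltW t0); have := vinfnormD p' (t *: q).
rewrite Ad' in p'L; lra.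
Qed.

End Conformal.

Lemma hoffman_bound (R : realType) K M (A : 'M[R]_(K, M)) : exists2 L, 0 <= L &
  forall beta C x, F0 A beta C !=set0 -> box C x ->
  exists2 y, F0 A beta C y & vinfnorm (x - y) <= L * vinfnorm (A *m x - beta).
Proof.
have [L L0 hL] := free_support_bound A.
exists L => // beta C x [w0 [Aw0 w0C]] xC.
have [p [pb Ap pL]] := bounded_conformal_preimage L0 hL (w0 - x).
exists (x + p); first split.
- by rewrite mulmxDr Ap mulmxBr Aw0 addrC subrK.
- move=> i; move: (pb i) (xC i) (w0C i); rewrite !mxE => + /andP [? ?] /andP [? ?].
  by case=> /andP [? ?]; apply/andP; split; lra.
- by rewrite opprD addrA subrr add0r vinfnormN vinfnorm_distC -Aw0 -mulmxBr.
Qed.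

Section Hausdorff.
Variables (R : realType) (M : nat).

Lemma enorm_distC (u v : 'cV[R]_M) : enorm (u - v) = enorm (v - u).
Proof. by congr Num.sqrt; apply: eq_bigr => i _; rewrite !mxE -sqrrN opprB. Qed.

Lemma dist_set_le (u : 'cV[R]_M) S B :
  (exists2 t, S t & enorm (u - t) <= B) -> 0 <= dist_set u S <= B.
Proof.
move=> [t St utB].
have lb0 : lbound [set enorm (u - v) | v in S] 0 by move=> _ [v _ <-]; exact: enorm_ge0.
rewrite lb_le_inf //=; last by exists (enorm (u - t)), t.
by apply: le_trans utB; apply: ge_inf; [exists 0 | exists t].
Qed.

Lemma sup_between (X : set R) B :
  0 <= B -> (forall x, X x -> 0 <= x <= B) -> 0 <= sup X <= B.
Proof.
move=> B0 XB; have [->|/set0P [x Xx]] := eqVneq X set0; first by rewrite sup0 lexx B0.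
have [x0 xB] := andP (XB x Xx).
apply/andP; split; last by apply: ge_sup; [exists x | move=> y /XB /andP []].
by apply: le_trans x0 (ub_le_sup _ Xx); exists B => y /XB /andP [].
Qed.

Lemma hausdorff_le (S T : set 'cV[R]_M) B : 0 <= B ->
  (forall s, S s -> exists2 t, T t & enorm (s - t) <= B) ->
  (forall t, T t -> exists2 s, S s & enorm (t - s) <= B) ->
  `|hausdorff S T| <= B.
Proof.
move=> B0 ST TS.
have /andP [ST0 STB] : 0 <= sup [set dist_set s T | s in S] <= B.
  by apply: sup_between => // _ [s Ss <-]; apply/dist_set_le/ST.
have /andP [_ TSB] : 0 <= sup [set dist_set t S | t in T] <= B.
  by apply: sup_between => // _ [t Tt <-]; apply/dist_set_le/TS.
by rewrite ger0_norm ?le_max ?ST0 // ge_max STB.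
Qed.

End Hausdorff.

Section Perturbation.
Variables (R : realType) (K M : nat) (C : R).
Hypothesis C0 : 0 <= C.

(* On the box [|dA *m w| <= M max|dA| C], so this bounds the change of every
   residual when the data are perturbed by [(dA, db)]. *)
Definition data_error (dA : 'M[R]_(K, M)) (db : 'cV[R]_K) :=
  M%:R * mmaxabs dA * C + vinfnorm db.

Lemma data_error_ge0 dA db : 0 <= data_error dA db.
Proof. by rewrite addr_ge0 ?vinfnorm_ge0 ?mulr_ge0 ?mmaxabs_ge0. Qed.

Lemma data_errorN dA db : data_error (- dA) (- db) = data_error dA db.
Proof. by rewrite /data_error mmaxabsN vinfnormN. Qed.

Lemma box0 : box C (0 : 'cV[R]_M).
Proof. by move=> i; rewrite mxE lexx. Qed.

Lemma vinfnorm_box (w : 'cV[R]_M) : box C w -> vinfnorm w <= C.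
Proof. by move=> wC; apply: vinfnorm_le => // i; have /andP [/ger0_norm -> ->] := wC i. Qed.

Lemma residual_le A Ah beta bh (w : 'cV[R]_M) : box C w ->
  vinfnorm (Ah *m w - bh) <= vinfnorm (A *m w - beta) + data_error (Ah - A) (bh - beta).
Proof.
move=> wC.
have -> : Ah *m w - bh = (A *m w - beta) + ((Ah - A) *m w - (bh - beta)).
  by rewrite mulmxBl opprB addrACA addKr subrKC.
apply: le_trans (vinfnormD _ _) _; rewrite lerD2l.
apply: le_trans (vinfnormD _ _) _; rewrite vinfnormN lerD2r.
apply: le_trans (vinfnorm_mulmx_le _ _) _.
by rewrite ler_wpM2l ?vinfnorm_box ?mulr_ge0 ?mmaxabs_ge0.
Qed.

Lemma mhat_le (Ah : 'M[R]_(K, M)) (bh : 'cV[R]_K) w :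
  box C w -> mhat Ah bh C <= vinfnorm (Ah *m w - bh).
Proof.
move=> wC; apply: ge_inf; last by exists w.
by exists 0 => _ [v _ <-]; exact: vinfnorm_ge0.
Qed.

Lemma mhat_ge0 (Ah : 'M[R]_(K, M)) bh : 0 <= mhat Ah bh C.
Proof.
apply: lb_le_inf; first by exists (vinfnorm (Ah *m 0 - bh)), 0; first exact: box0.
by move=> _ [v _ <-]; exact: vinfnorm_ge0.
Qed.

Lemma exists_near_minimizer (Ah : 'M[R]_(K, M)) bh h : 0 < h ->
  exists2 v, box C v & vinfnorm (Ah *m v - bh) < mhat Ah bh C + h.
Proof.
move=> h0.
have [|_ [v vC <-]] := @inf_adherent _ [set vinfnorm (Ah *m v - bh) | v in box C] _ h0.
  split; first by exists (vinfnorm (Ah *m 0 - bh)), 0; first exact: box0.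
  by exists 0 => _ [v _ <-]; exact: vinfnorm_ge0.
by exists v.
Qed.

End Perturbation.

Lemma data_error_rate (R : realType) K M (C : R) (dA : 'M[R]_(K, M)) db a b s :
  0 <= C -> 0 <= s -> `|mmaxabs dA| <= a * s -> `|vinfnorm db| <= b * s ->
  data_error C dA db <= (M%:R * `|a| * C + `|b|) * s.
Proof.
move=> C0 s0 dAs dbs.
have dA_le : mmaxabs dA <= `|a| * s.
  by rewrite (le_trans (ler_norm _)) // (le_trans dAs) // ler_wpM2r ?ler_norm.
have db_le : vinfnorm db <= `|b| * s.
  by rewrite (le_trans (ler_norm _)) // (le_trans dbs) // ler_wpM2r ?ler_norm.
have := ler_wpM2r C0 (ler_wpM2l (ler0n _ M) dA_le).
rewrite /data_error; lra.
Qed.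

Lemma mulmx_full_rank_inj (F : fieldType) K M (A : 'M[F]_(K, M)) :
  \rank A = M -> injective (mulmx A : 'cV_M -> 'cV_K).
Proof.
move=> rkA u v /(congr1 trmx); rewrite !trmx_mul => /row_free_inj uv.
by apply: trmx_inj; apply: uv; rewrite /row_free mxrank_tr rkA.
Qed.

Section ThresholdSet.
Variables (R : realType) (K M : nat) (A : 'M[R]_(K, M)) (beta : 'cV[R]_K).
Variables (C L : R) (w0 : 'cV[R]_M).
Hypotheses (C0 : 0 <= C) (L0 : 0 <= L) (w0F0 : F0 A beta C w0).
Hypothesis hoffman : forall x, box C x ->
  exists2 y, F0 A beta C y & vinfnorm (x - y) <= L * vinfnorm (A *m x - beta).

Variables (Ah : 'M[R]_(K, M)) (bh : 'cV[R]_K) (kap : R) (n : nat).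
Let h := kap / Num.sqrt n%:R.
Let e := data_error C (Ah - A) (bh - beta).

Lemma Fn_near_F0 s : Fn Ah bh C kap n s ->
  exists2 y, F0 A beta C y & enorm (s - y) <= Num.sqrt M%:R * L * (h + 2 * e).
Proof.
move=> [sFn sC]; have [y yF0 syL] := hoffman sC.
exists y => //; apply: le_trans (enorm_le_vinfnorm _) _.
rewrite -mulrA ler_wpM2l ?sqrtr_ge0 // (le_trans syL) // ler_wpM2l //.
(* |A s - beta| <= |Ah s - bh| + e <= h + mhat + e <= h + |Ah w0 - bh| + e <= h + 2 e *)
have w0_res : vinfnorm (Ah *m w0 - bh) <= e.
  have := residual_le C0 A Ah beta bh (proj2 w0F0).
  by rewrite (proj1 w0F0) subrr vinfnorm0 add0r.
have s_res : vinfnorm (A *m s - beta) <= vinfnorm (Ah *m s - bh) + e.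
  by have := residual_le C0 Ah A bh beta sC; rewrite -data_errorN !opprB.
have := mhat_le Ah bh (proj2 w0F0); rewrite -/h in sFn; lra.
Qed.

Lemma F0_sub_Fn : e <= h -> F0 A beta C `<=` Fn Ah bh C kap n.
Proof.
move=> eh t [At tC]; split => //.
have := residual_le C0 A Ah beta bh tC; rewrite At subrr vinfnorm0 add0r.
have := mhat_ge0 C0 Ah bh; rewrite -/h -/e; lra.
Qed.

Lemma Fn_neq0 : 0 < h -> Fn Ah bh C kap n !=set0.
Proof.
move=> h0; have [v vC vmin] := exists_near_minimizer C0 Ah bh h0.
by exists v; split => //; rewrite -/h; lra.
Qed.

Lemma hausdorff_Fn_F0_small_error : e <= h ->
  `|hausdorff (Fn Ah bh C kap n) (F0 A beta C)| <= Num.sqrt M%:R * L * (h + 2 * e).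
Proof.
move=> eh; have e0 : 0 <= e := data_error_ge0 C0 _ _.
apply: hausdorff_le; [by rewrite !mulr_ge0 ?sqrtr_ge0 //; lra | exact: Fn_near_F0 |].
move=> t tF0; exists t; first exact: F0_sub_Fn.
rewrite subrr (le_trans (enorm_le_vinfnorm _)) // vinfnorm0 mulr0.
by rewrite !mulr_ge0 ?sqrtr_ge0 //; lra.
Qed.

Lemma hausdorff_Fn_F0_full_rank : \rank A = M -> 0 < h ->
  `|hausdorff (Fn Ah bh C kap n) (F0 A beta C)| <= Num.sqrt M%:R * L * (h + 2 * e).
Proof.
move=> rkA h0; have e0 : 0 <= e := data_error_ge0 C0 _ _.
apply: hausdorff_le; [by rewrite !mulr_ge0 ?sqrtr_ge0 //; lra | exact: Fn_near_F0 |].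
move=> t [At _]; have [v vFn] := Fn_neq0 h0.
have [y [Ay _] vy] := Fn_near_F0 vFn.
have -> : t = y by apply: (mulmx_full_rank_inj rkA); rewrite At Ay.
by exists v; rewrite // enorm_distC.
Qed.

End ThresholdSet.

Lemma bigOp_bound2 (R : realType) (d : measure_display) (T : measurableType d)
  (P : probability T R) (X1 X2 Y : nat -> T -> R) (s r : nat -> R) :
  bigOp P X1 s -> bigOp P X2 s ->
  (forall a b : R, exists c : R, exists N : nat, forall n, (N <= n)%N ->
     forall w, `|X1 n w| <= a * s n -> `|X2 n w| <= b * s n -> `|Y n w| <= c * r n) ->
  bigOp P Y r.
Proof.
move=> X1s X2s Ybound eps eps0.
have eps2 : 0 < eps / 2 by rewrite divr_gt0.
have [a [N1 X1a]] := X1s _ eps2; have [b [N2 X2b]] := X2s _ eps2.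
have [c [N Yc]] := Ybound a b.
exists c, (maxn N (maxn N1 N2)) => n; rewrite !geq_max => /and3P [Nn N1n N2n].
have [E1 [mE1 [sE1 PE1]]] := X1a n N1n; have [E2 [mE2 [sE2 PE2]]] := X2b n N2n.
exists (E1 `|` E2); split; first exact: measurableU.
split; last by rewrite (le_lt_trans (measureU2 P mE1 mE2)) // [eps]splitr EFinD lteD.
move=> w /= Yw; apply: contrapT => /not_orP [nE1 nE2].
have X1w : `|X1 n w| <= a * s n by rewrite leNgt; apply: contra_notN nE1 => /sE1.
have X2w : `|X2 n w| <= b * s n by rewrite leNgt; apply: contra_notN nE2 => /sE2.
by move: Yw; rewrite ltNge Yc.
Qed.

Unset Implicit Arguments. Set Strict Implicit.

Theorem lemma4 (R : realType) (d : measure_display) (T : measurableType d)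
  (P : probability T R) (K M : nat) (A : 'M[R]_(K, M)) (beta : 'cV[R]_K)
  (C : R) (Ahat : nat -> T -> 'M[R]_(K, M)) (betahat : nat -> T -> 'cV[R]_K)
  (kappa : nat -> R) :
  0 < C ->
  F0 A beta C !=set0 ->
  bigOp P (fun n w => mmaxabs (Ahat n w - A)) (fun n => (Num.sqrt n%:R)^-1) ->
  bigOp P (fun n w => vinfnorm (betahat n w - beta)) (fun n => (Num.sqrt n%:R)^-1) ->
  (forall n, 0 < kappa n) ->
  ((kappa n @[n --> \oo] --> +oo) ->
   (kappa n / Num.sqrt n%:R @[n --> \oo] --> 0) ->
   bigOp P (fun n w => hausdorff (Fn (Ahat n w) (betahat n w) C (kappa n) n)
                                 (F0 A beta C))
           (fun n => kappa n / Num.sqrt n%:R))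
  /\
  (\rank A = M ->
   (exists B : R, forall n, kappa n <= B) ->
   bigOp P (fun n w => hausdorff (Fn (Ahat n w) (betahat n w) C (kappa n) n)
                                 (F0 A beta C))
           (fun n => (Num.sqrt n%:R)^-1)).
Proof.
move=> /ltW C0 F0_neq0 hA hb kappa_gt0; have [w0 w0F0] := F0_neq0.
have [L L0 /(_ beta C) hL] := hoffman_bound A.
have hoffman x := hL x F0_neq0.
have s_ge0 n : 0 <= (Num.sqrt n%:R)^-1 :> R by rewrite invr_ge0 sqrtr_ge0.
have SL_ge0 : 0 <= Num.sqrt M%:R * L by rewrite mulr_ge0 ?sqrtr_ge0.
split=> [kappa_oo _ | rkA [B kappa_le]]; apply: (bigOp_bound2 hA hb) => a b;
  set rate := M%:R * `|a| * C + `|b|.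
- have [N _ Nrate] := (cvgryPge _).1 kappa_oo rate.
  exists (Num.sqrt M%:R * L * 3), N => n Nn w An bn.
  have eh : data_error C (Ahat n w - A) (betahat n w - beta) <= kappa n / Num.sqrt n%:R.
    by rewrite (le_trans (data_error_rate C0 (s_ge0 n) An bn)) ?ler_wpM2r ?Nrate.
  rewrite (le_trans (hausdorff_Fn_F0_small_error C0 L0 w0F0 hoffman eh)) //.
  by rewrite -[X in _ <= X]mulrA ler_wpM2l //; lra.
- exists (Num.sqrt M%:R * L * (`|B| + 2 * rate)), 1%N => n n_gt0 w An bn.
  have s_gt0 : 0 < (Num.sqrt n%:R)^-1 :> R by rewrite invr_gt0 sqrtr_gt0 ltr0n.
  have h_gt0 : 0 < kappa n / Num.sqrt n%:R by rewrite mulr_gt0.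
  rewrite (le_trans (hausdorff_Fn_F0_full_rank C0 L0 w0F0 hoffman _ _ rkA h_gt0)) //.
  rewrite -[X in _ <= X]mulrA ler_wpM2l //.
  have := data_error_rate C0 (ltW s_gt0) An bn.
  have := ler_wpM2r (ltW s_gt0) (le_trans (kappa_le n) (ler_norm B)); rewrite /rate; lra.
Qed.
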